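(* Fix $q\in Q$, $a\in A$ and $k$, write $\epsilon:=\varepsilon^s$, and consider $$G(\lambda,\mu):=\sum_{j\in\overline{\mathcal N}^{q,a}}\min\big\{\underline P(q,a,q_j)(h_j(\mu)-\lambda),\ \overline P(q,a,q_j)(h_j(\mu)-\lambda)\big\}-\mu\epsilon+\lambda,$$ $$h_j(\mu):=\min_{i\in\overline{\mathcal N}^{q,a}_W}\{\underline p^k(q_i)+\mu\,c(q_i,q_j)\},$$ for $\lambda\in\mathbb R$, $\mu\ge0$. Then $G$ is concave, the optimal value of $\max_{\mu\ge0,\lambda\in\mathbb R}G(\lambda,\mu)$ equals the optimal value of the linear program (LP) below, and for every $\mu\ge0$, $$\max_{\lambda\in\mathbb R}G(\lambda,\mu)=\max_{j\in\overline{\mathcal N}^{q,a}}G(h_j(\mu),\mu).$$ The linear program (LP) is: minimize $\sum_{i\in\overline{\mathcal N}^{q,a}_W}\gamma_i\underline p^k(q_i)$ over $\gamma_i,\widehat\gamma_j,\pi_{ij}$ subject to $\underline P(q,a,q_j)\le\widehat\gamma_j\le\overline P(q,a,q_j)$ ($j\in\overline{\mathcal N}^{q,a}$), $\sum_{j}\widehat\gamma_j=1$, $\pi_{ij}\ge0$, $\sum_{i\in\overline{\mathcal N}^{q,a}_W}\pi_{ij}=\widehat\gamma_j$ ($j\in\overline{\mathcal N}^{q,a}$), $\sum_{j\in\overline{\mathcal N}^{q,a}}\pi_{ij}=\gamma_i$ ($i\in\overline{\mathcal N}^{q,a}_W$), and $\sum_{i,j}\pi_{ij}c(q_i,q_j)\le\epsilon$,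 where $i$ ranges over $\overline{\mathcal N}^{q,a}_W$ and $j$ over $\overline{\mathcal N}^{q,a}$.
   Context: Fix $n\ge1$, $s\ge1$, $\varepsilon\ge0$, a finite mode set $U=\{1,\dots,m\}$, continuous $f_u:\mathbb R^n\to\mathbb R^n$, a nominal Borel probability $\widehat p_v$ on $\mathbb R^n$ with finite $s$-th moment, and a set $W\subseteq\mathbb R^n$ (containing the support of the true noise distribution). Let $T^u_{p_v}(B\mid x):=p_v(\{v:f_u(x)+v\in B\})$. Abstraction. $X\subset\mathbb R^n$ bounded Borel, $X_{\rm tgt}\subset X$; $Q_{\rm safe}$ a finite family of pairwise disjoint Borel sets with union $X$, each either contained in or disjoint from $X_{\rm tgt}$; $Q_{\rm tgt}$ those contained in $X_{\rm tgt}$; $q_u:=\mathbb R^n\setminus X$; $Q:=Q_{\rm safe}\cup\{q_u\}=\{q_1,\dots,q_N\}$ indexed by $\mathcal N=\{1,\dots,N\}$; $A:=U$. Bounds $\underline P\le\overline P$ in $[0,1]$ on $Q\times A\times Q$ with $\sum_{q'}\underline P(q,a,q')\le1\le\sum_{q'}\overline P(q,a,q')$, $\underline P(q,a,q')\le\inf_{x\in q}T^a_{\widehat p_v}(q'\mid x)$, $\overline P(q,a,q')\ge\sup_{x\in q}T^a_{\widehat p_v}(q'\mid x)$ for $q\in Q_{\rm safe}$, and $\underline P(q_u,a,q_u)=\overline P(q_u,a,q_u)=1$. Cost $c(q,q'):=\inf\{\|x-y\|^s:x\in q,y\in q'\}$ (Euclidean norm). Index sets: $\overline{\mathcal N}^{q,a}:=\{i:\overline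 P(q,a,q_i)>0\}$ and $\overline{\mathcal N}^{q,a}_W:=\{i:(f_a(q)+W)\cap q_i\ne\emptyset\}$, with $f_a(q)$ the image of $q$ under $f_a$; it is assumed that $\overline{\mathcal N}^{q,a}\subseteq\overline{\mathcal N}^{q,a}_W$ (the nominal distribution is supported in $W$). $\underline p^k:Q\to[0,1]$ is the $k$-th iterate of the robust dynamic programming recursion: $\underline p^0=\mathbf 1_{Q_{\rm tgt}}$, $\underline p^{k+1}(q)=1$ on $Q_{\rm tgt}$ and otherwise $\max_{a}\min_{\gamma\in\Gamma_{q,a}}\sum_{q'}\gamma(q')\underline p^k(q')$ (for the purposes of the claim only $\underline p^k\ge0$ matters). *)

From HB Require Import structures.
From mathcomp Require Import all_boot all_order all_algebra.
From mathcomp Require Import all_classical all_reals all_analysis.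
Set Implicit Arguments. Unset Strict Implicit. Unset Printing Implicit Defensive.
Import Order.TTheory GRing.Theory Num.Theory numFieldNormedType.Exports.
Local Open Scope classical_set_scope.
Local Open Scope ring_scope.

Definition enorm (R : realType) (n : nat) (x : 'rV[R]_n) : R :=
  Num.sqrt (\sum_(i < n) x ord0 i ^+ 2).

Definition setcost (R : realType) (n : nat) (s : R) (A B : set 'rV[R]_n) : R :=
  inf [set r | exists x y, A x /\ B y /\ r = (enorm (x - y)) `^ s].

Definition Nbar (R : realType) (N m : nat) (Pu : 'I_N -> 'I_m -> 'I_N -> R)
  (q : 'I_N) (a : 'I_m) : {set 'I_N} := [set j | 0 < Pu q a j].

Definition NbarW (R : realType) (n N m : nat) (Qs : 'I_N -> set 'rV[R]_n)
  (f : 'I_m -> 'rV[R]_n -> 'rV[R]_n) (W : set 'rV[R]_n)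
  (q : 'I_N) (a : 'I_m) : {set 'I_N} :=
  [set i | `[< exists x w, Qs q x /\ W w /\ Qs i (f a x + w) >]].

(* minimum of F over a finite set A (taken as an infimum; A is nonempty
   wherever it is used) *)
Definition finmin (R : realType) (T : finType) (A : {set T}) (F : T -> R) : R :=
  inf (F @` [set x | x \in A]).

Definition hfun (R : realType) (n N : nat) (Qs : 'I_N -> set 'rV[R]_n) (s : R)
  (p : 'I_N -> R) (I : {set 'I_N}) (j : 'I_N) (mu : R) : R :=
  finmin I (fun i => p i + mu * setcost s (Qs i) (Qs j)).

Definition Gfun (R : realType) (n N m : nat) (Qs : 'I_N -> set 'rV[R]_n)
  (f : 'I_m -> 'rV[R]_n -> 'rV[R]_n) (W : set 'rV[R]_n) (s eps : R)
  (Pl Pu : 'I_N -> 'I_m -> 'I_N -> R) (p : 'I_N -> R) (q : 'I_N) (a : 'I_m)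
  (lam mu : R) : R :=
  let J := Nbar Pu q a in
  let I := NbarW Qs f W q a in
  \sum_(j in J) Num.min (Pl q a j * (hfun Qs s p I j mu - lam))
                        (Pu q a j * (hfun Qs s p I j mu - lam))
  - mu * eps `^ s + lam.

Definition LPfeasible (R : realType) (n N m : nat) (Qs : 'I_N -> set 'rV[R]_n)
  (f : 'I_m -> 'rV[R]_n -> 'rV[R]_n) (W : set 'rV[R]_n) (s eps : R)
  (Pl Pu : 'I_N -> 'I_m -> 'I_N -> R) (q : 'I_N) (a : 'I_m)
  (gam gamh : 'I_N -> R) (pi : 'I_N -> 'I_N -> R) : Prop :=
  let J := Nbar Pu q a in
  let I := NbarW Qs f W q a in
  (forall j, j \in J -> Pl q a j <= gamh j <= Pu q a j) /\
  \sum_(j in J) gamh j = 1 /\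
  (forall i j, i \in I -> j \in J -> 0 <= pi i j) /\
  (forall j, j \in J -> \sum_(i in I) pi i j = gamh j) /\
  (forall i, i \in I -> \sum_(j in J) pi i j = gam i) /\
  \sum_(i in I) \sum_(j in J) pi i j * setcost s (Qs i) (Qs j) <= eps `^ s.

Definition LPobj (R : realType) (n N m : nat) (Qs : 'I_N -> set 'rV[R]_n)
  (f : 'I_m -> 'rV[R]_n -> 'rV[R]_n) (W : set 'rV[R]_n)
  (p : 'I_N -> R) (q : 'I_N) (a : 'I_m) (gam : 'I_N -> R) : R :=
  \sum_(i in NbarW Qs f W q a) gam i * p i.

(* For fixed mu, G(., mu) is the Lagrangian dual of the inner problem in which
   the transport cost is priced at mu.  Weak duality
   G(lam, mu) <= sum_i gam_i p_i + mu (sum_ij pi_ij c_ij - eps^s) holds for every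
   plan; conversely, routing each column j to a minimiser of p_i + mu c_ij and
   choosing the weights greedily (lower bounds above a threshold h_j0(mu), upper
   bounds below it, interpolation at it) attains it with lam = h_j0(mu).  The cost constraint is then dualised:
   an optimal plan exists by compactness, and a multiplier mu0 >= 0 exists since
   the ratios (value deficit) / (cost excess) of plans are bounded above, because
   collapsing all costly mass onto the diagonal gives a cost-free plan whose value
   exceeds the original one by at most a constant times its cost.  Concavity of G
   comes from the concavity of h_j in mu and of min(Pl y, Pu y) in y. *)

From HB Require Import structures.
From mathcomp Require Import all_boot all_order all_algebra.
From mathcomp Require Import all_classical all_reals all_analysis.
From mathcomp Require Import ring lra.
Import Order.TTheory GRing.Theory Num.Theory numFieldNormedType.Exports.
Import ArrowAsProduct.
Local Open Scope classical_set_scope.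
Local Open Scope ring_scope.
Set Implicit Arguments. Unset Strict Implicit. Unset Printing Implicit Defensive.

Section FinMin.
Variables (R : realType) (T : finType) (A : {set T}).

Lemma finmin_attained (F : T -> R) : (exists i, i \in A) ->
  exists2 i, i \in A & finmin A F = F i /\ forall k, k \in A -> F i <= F k.
Proof.
case=> i0 Ai0; have [i Ai Fmin] := arg_minP F Ai0.
exists i => //; split => //; apply/le_anti/andP; split.
- by apply: ge_inf; [exists (F i) => _ [k /= Ak <-]; exact: Fmin | exists i].
- by apply: lb_le_inf; [exists (F i), i | move=> _ [k /= Ak <-]; exact: Fmin].
Qed.

Lemma finmin_le (F : T -> R) k : k \in A -> finmin A F <= F k.
Proof.
by move=> Ak; have [|i _ [-> Fmin]] := finmin_attained F; [exists k | exact: Fmin].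
Qed.

Lemma finmin_affine_concave (a b : T -> R) m1 m2 t :
  (exists i, i \in A) -> 0 <= t <= 1 ->
  t * finmin A (fun i => a i + m1 * b i) + (1 - t) * finmin A (fun i => a i + m2 * b i)
  <= finmin A (fun i => a i + (t * m1 + (1 - t) * m2) * b i).
Proof.
move=> A0 /andP[t0 t1]; have t1' : 0 <= 1 - t by rewrite subr_ge0.
have [i Ai [-> _]] := finmin_attained (fun i => a i + (t * m1 + (1 - t) * m2) * b i) A0.
apply: le_trans (_ : _ <= t * (a i + m1 * b i) + (1 - t) * (a i + m2 * b i)) _.
  by apply: lerD; apply: ler_wpM2l => //; exact: finmin_le.
lra.
Qed.

End FinMin.

Lemma setcost_ge0 (R : realType) n (s : R) (A B : set 'rV[R]_n) :
  0 <= setcost s A B.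
Proof.
rewrite /setcost; set S := mkset _; have [[r Sr]|S0] := pselect (S !=set0).
  by apply: lb_le_inf => [|_ [x [y [_ [_ ->]]]]]; [exists r | exact: powR_ge0].
rewrite (_ : S = set0) ?inf0 //.
by apply/seteqP; split => // r Sr; apply: S0; exists r.
Qed.

Lemma setcost_diag (R : realType) n (s : R) (A : set 'rV[R]_n) :
  s != 0 -> setcost s A A = 0.
Proof.
move=> s0; apply/le_anti; rewrite setcost_ge0 andbT /setcost.
have [[x Ax]|A0] := pselect (A !=set0).
  apply: ge_inf; first by exists 0 => _ [? [? [_ [_ ->]]]]; exact: powR_ge0.
  exists x, x; do 2 split => //.
  by rewrite subrr /enorm big1 ?sqrtr0 ?powR0 // => i _; rewrite mxE expr0n.
rewrite (_ : mkset _ = set0) ?inf0 //.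
by apply/seteqP; split => // r [x [_ [Ax _]]]; apply: A0; exists x.
Qed.

Section MinScale.
Variable R : realType.
Implicit Types l u g y : R.

Definition min_scale l u y := Num.min (l * y) (u * y).

Lemma min_scale_le l u g y : l <= g <= u -> min_scale l u y <= g * y.
Proof.
case/andP=> lg gu; rewrite /min_scale ge_min.
case: (leP 0 y) => y0; first by rewrite ler_wpM2r.
by rewrite [X in _ || X]ler_wnM2r ?orbT // ltW.
Qed.

Lemma min_scale_pos l u y : l <= u -> 0 <= y -> min_scale l u y = l * y.
Proof. by move=> lu y0; rewrite /min_scale min_l // ler_wpM2r. Qed.

Lemma min_scale_neg l u y : l <= u -> y <= 0 -> min_scale l u y = u * y.
Proof. by move=> lu y0; rewrite /min_scale min_r // ler_wnM2r. Qed.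

Lemma min_scale_homo l u : 0 <= l <= u -> {homo min_scale l u : y1 y2 / y1 <= y2}.
Proof.
case/andP=> l0 lu y1 y2 y12; rewrite /min_scale le_min !ge_min.
by rewrite !ler_wpM2l ?orbT // (le_trans l0).
Qed.

Lemma min_scale_concave l u y1 y2 t : 0 <= t <= 1 ->
  t * min_scale l u y1 + (1 - t) * min_scale l u y2
    <= min_scale l u (t * y1 + (1 - t) * y2).
Proof.
case/andP=> t0 t1; have t1' : 0 <= 1 - t by rewrite subr_ge0.
rewrite /min_scale le_min; apply/andP; split.
- apply: le_trans (_ : _ <= t * (l * y1) + (1 - t) * (l * y2)) _; last lra.
  by apply: lerD; apply: ler_wpM2l => //; rewrite ge_min lexx.
- apply: le_trans (_ : _ <= t * (u * y1) + (1 - t) * (u * y2)) _; last lra.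
  by apply: lerD; apply: ler_wpM2l => //; rewrite ge_min lexx orbT.
Qed.

End MinScale.

Section GreedyWeights.
Variables (R : realType) (T : finType) (J : {set T}) (l u v : T -> R).
Hypothesis J0 : exists j, j \in J.
Hypothesis lu : forall k, k \in J -> l k <= u k.
Hypothesis sum_l : \sum_(k in J) l k <= 1.
Hypothesis sum_u : 1 <= \sum_(k in J) u k.

Let mass_lt x := \sum_(k in J) (if x < v k then l k else u k).
Let mass_le x := \sum_(k in J) (if x <= v k then l k else u k).

Lemma threshold_exists :
  exists2 j0, j0 \in J & mass_le (v j0) <= 1 <= mass_lt (v j0).
Proof.
(* j0 has the least value with [1 <= mass_lt]; at the largest value below it,
   [mass_lt] is [mass_le (v j0)] and is [< 1]. *)
have [j Jj] := J0; have [jm Jjm vmax] := arg_maxP v Jj.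
pose Jh := [set j in J | 1 <= mass_lt (v j)].
have Jhjm : jm \in Jh.
  rewrite inE; apply/andP; split; first exact: Jjm.
  by rewrite /mass_lt (eq_bigr u) // => k /vmax /= vk; rewrite ltNge vk.
have [j0 Jhj0 vmin] := arg_minP v Jhjm.
have /[!inE] /andP[Jj0 hi1] : j0 \in Jh by [].
exists j0 => //; rewrite hi1 andbT.
have [[k1 Ltk1]|noLt] := pselect (exists k, k \in [set k in J | v k < v j0]).
  have [k Ltk vkmax] := arg_maxP v Ltk1.
  have /[!inE] /andP[Jk vk] : k \in [set k in J | v k < v j0] by [].
  have k_notin : k \notin Jh.
    by apply/negP => /vmin; rewrite leNgt vk.
  have -> : mass_le (v j0) = mass_lt (v k).
    apply: eq_bigr => k' Jk'; congr (if _ then _ else _).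
    apply/idP/idP => [|vkk']; first exact: lt_le_trans.
    rewrite leNgt; apply/negP => vk'j0.
    have /vkmax /= : k' \in [set k in J | v k < v j0] by rewrite inE Jk' vk'j0.
    by rewrite leNgt vkk'.
  by move: k_notin; rewrite inE Jk /= -ltNge => /ltW.
rewrite /mass_le (eq_bigr l) // => k Jk; case: leP => // vk.
by exfalso; apply: noLt; exists k; rewrite inE Jk vk.
Qed.

Lemma greedy_weights : exists2 j0, j0 \in J & exists g,
  [/\ forall k, k \in J -> l k <= g k <= u k,
      \sum_(k in J) g k = 1 &
      forall k, k \in J -> min_scale (l k) (u k) (v k - v j0) = g k * (v k - v j0)].
Proof.
have [j0 Jj0 /andP[lo1 hi1]] := threshold_exists.
set lo := mass_le (v j0) in lo1; set hi := mass_lt (v j0) in hi1.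
(* when [hi = lo] this is [0], by the convention [x / 0 = 0] *)
pose th := (1 - lo) / (hi - lo).
have th01 : 0 <= th <= 1.
  have [hilo|hilo] := eqVneq hi lo.
    by rewrite /th hilo subrr invr0 mulr0 lexx ler01.
  have d0 : 0 < hi - lo by rewrite subr_gt0 lt_neqAle eq_sym hilo (le_trans lo1 hi1).
  rewrite /th ler_pdivrMr // mul1r lerD2r hi1 andbT.
  by apply: divr_ge0; [rewrite subr_ge0 | exact: ltW].
pose g k :=
  if v j0 < v k then l k else if v k < v j0 then u k else l k + th * (u k - l k).
exists j0 => //; exists g; split.
- move=> k Jk; have := lu Jk; rewrite /g.
  case: ifP => _ luk; first by rewrite lexx luk.
  case: ifP => _; first by rewrite luk lexx.
  case/andP: th01 => th0 th1; apply/andP; split.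
    by rewrite lerDl mulr_ge0 ?subr_ge0.
  by rewrite -lerBrDl ler_piMl ?subr_ge0.
- have -> : \sum_(k in J) g k = lo + th * (hi - lo).
    rewrite /lo /hi /mass_le /mass_lt -sumrB mulr_sumr -big_split /=.
    apply: eq_bigr => k _; rewrite /g.
    by case: (ltgtP (v j0) (v k)); rewrite ?subrr ?mulr0 ?addr0.
  have [hilo|hilo] := eqVneq hi lo.
    by rewrite hilo subrr mulr0 addr0; apply/le_anti; rewrite lo1 -hilo.
  by rewrite /th divfK ?subr_eq0 // addrC subrK.
- move=> k Jk; rewrite /g; case: (ltgtP (v j0) (v k)) => vk.
  + by rewrite min_scale_pos ?lu // subr_ge0 ltW.
  + by rewrite min_scale_neg ?lu // subr_le0 ltW.
  + by rewrite vk subrr !mulr0 /min_scale !mulr0 minxx.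
Qed.

End GreedyWeights.

Section LagrangeMultiplier.
Variables (R : realType) (X : Type) (mix : R -> X -> X -> X).
Variables (P : X -> Prop) (a b : X -> R) (E : R).
Hypothesis P_mix : forall t x y, 0 <= t <= 1 -> P x -> P y -> P (mix t x y).
Hypothesis a_mix : forall t x y, a (mix t x y) = t * a x + (1 - t) * a y.
Hypothesis b_mix : forall t x y, b (mix t x y) = t * b x + (1 - t) * b y.
Hypothesis E_ge0 : 0 <= E.
(* Replaces a Slater point, which need not exist when [E = 0]. *)
Hypothesis slack : exists K, forall x, P x ->
  exists y, [/\ P y, b y <= 0 & a y <= a x + K * b x].
Variable xs : X.
Hypothesis xs_min : forall x, P x -> b x <= E -> a xs <= a x.

Lemma slope_le x x' : P x -> P x' -> b x < E -> E < b x' ->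
  (E - b x) * (a xs - a x') <= (b x' - E) * (a x - a xs).
Proof.
move=> Px Px' bx bx'; have bb : 0 < b x' - b x by rewrite subr_gt0 (lt_trans bx).
pose s := (b x' - E) / (b x' - b x).
have sbb : s * (b x' - b x) = b x' - E by rewrite /s divfK ?gt_eqF.
have s01 : 0 <= s <= 1.
  apply/andP; split; first by apply: divr_ge0; apply: ltW => //; rewrite subr_gt0.
  by rewrite ler_pdivrMr // mul1r lerD2l lerN2 ltW.
have E_eq : E = b x' - s * (b x' - b x) by rewrite sbb; ring.
have bmix : b (mix s x x') <= E by rewrite b_mix E_eq; lra.
have := ler_wpM2l (ltW bb) (xs_min (P_mix s01 Px Px') bmix).
rewrite a_mix E_eq; lra.
Qed.

Lemma slope_bounded : exists K, forall x, P x -> E < b x ->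
  a xs - a x <= K * (b x - E).
Proof.
have [K HK] := slack; exists K => x Px bx.
have [y [Py by0 ay]] := HK x Px.
have bx0 : 0 < b x by rewrite (le_lt_trans E_ge0).
pose t := E / b x.
have tb : t * b x = E by rewrite /t divfK ?gt_eqF.
have t01 : 0 <= t <= 1.
  apply/andP; split; first exact: divr_ge0 E_ge0 (ltW bx0).
  by rewrite ler_pdivrMr // mul1r ltW.
have t1 : 0 <= 1 - t by case/andP: t01 => _; rewrite subr_ge0.
have bmix : b (mix t x y) <= E.
  by rewrite b_mix tb gerDl; apply: mulr_ge0_le0.
have := xs_min (P_mix t01 Px Py) bmix; rewrite a_mix.
have := ler_wpM2l t1 ay; rewrite -tb; lra.
Qed.

Theorem lagrange_multiplier : exists2 mu, 0 <= mu &
  forall x, P x -> a xs <= a x + mu * (b x - E).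
Proof.
have [K HK] := slope_bounded.
pose S := 0 |` [set (a xs - a x) / (b x - E) | x in [set x | P x /\ E < b x]].
have S0 : S 0 by left.
have S_ub : ubound S (Num.max 0 K).
  move=> _ [->|[x [Px bx] <-]]; first by rewrite le_max lexx.
  rewrite le_max; apply/orP; right.
  by rewrite ler_pdivrMr ?subr_gt0 // HK.
have S_sup : has_sup S by split; [exists 0 | exists (Num.max 0 K)].
exists (sup S); first exact: sup_upper_bound.
move=> x Px; case: (ltgtP E (b x)) => bx.
- have : S ((a xs - a x) / (b x - E)) by right; exists x.
  move/(sup_upper_bound S_sup); rewrite ler_pdivrMr ?subr_gt0 //; lra.
- have Eb : 0 < E - b x by rewrite subr_gt0.
  have axs := xs_min Px (ltW bx).
  suff : sup S <= (a x - a xs) / (E - b x) by rewrite ler_pdivlMr //; lra.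
  apply: ge_sup; first by exists 0.
  move=> _ [->|[x' [Px' bx'] <-]]; first by rewrite divr_ge0 ?subr_ge0 // ltW.
  rewrite ler_pdivrMr ?subr_gt0 // mulrAC ler_pdivlMr //.
  by rewrite mulrC [X in _ <= X]mulrC slope_le.
- by rewrite -bx subrr mulr0 addr0 xs_min ?bx.
Qed.

End LagrangeMultiplier.

Lemma continuous_sum (R : realType) (S : topologicalType) (I : Type) (r : seq I)
    (P : pred I) (F : I -> S -> R) :
  (forall i, continuous (F i)) -> continuous (fun x => \sum_(i <- r | P i) F i x).
Proof.
move=> Fc; elim: r => [|i r IHr].
  by under eq_fun do rewrite big_nil; exact: cst_continuous.
rewrite (_ : (fun x => _) = fun x => (if P i then F i x else 0) + \sum_(j <- r | P j) F j x).
  move=> x; apply: continuousD; last exact: IHr.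
  by case: (P i); [exact: Fc | exact: cst_continuous].
by apply/funext => x; rewrite big_cons; case: (P i); rewrite ?add0r.
Qed.

Lemma closed_forall (S : topologicalType) (I : Type) (A : I -> set S) :
  (forall i, closed (A i)) -> closed [set x | forall i, A i x].
Proof.
move=> Acl; rewrite (_ : mkset _ = \bigcap_(i in setT) A i); first exact: closed_bigI.
by apply/seteqP; split => x /= Ax i //; apply: Ax.
Qed.

Lemma closed_implies (S : topologicalType) (Q : Prop) (A : set S) :
  closed A -> closed [set x | Q -> A x].
Proof.
move=> Acl; have [q|nq] := pselect Q.
  by rewrite (_ : mkset _ = A) //; apply/seteqP; split => x /=; [apply | move=> ? _].
by rewrite (_ : mkset _ = setT) ?closedT //; apply/seteqP; split => x // _ /nq.
Qed.

Section EntryTopology.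
Variables (R : realType) (T : eqType).

Lemma entry_continuous i j : continuous (fun x : T -> T -> R => x i j).
Proof.
move=> x; apply: (@continuous_comp _ _ _ (fun x : T -> T -> R => x i) (fun y => y j)).
  exact: (@proj_continuous _ (fun=> T -> R) i).
exact: (@proj_continuous _ (fun=> R) j).
Qed.

Lemma unit_box_compact :
  compact [set x : T -> T -> R | forall i j, x i j \in `[0, 1]].
Proof.
apply: (@tychonoff _ _ (fun=> [set y : T -> R | forall j, y j \in `[0, 1]])) => _.
by apply: (@tychonoff _ _ (fun=> [set r : R | r \in `[0, 1]])) => _; exact: segment_compact.
Qed.

End EntryTopology.

Section TransportDual.
Variables (R : realType) (T : finType) (I J : {set T}) (c : T -> T -> R).
Variables (p Pl Pu : T -> R) (E : R).
Hypothesis J_sub_I : {subset J <= I}.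
Hypothesis J0 : exists j, j \in J.
Hypothesis c_ge0 : forall i j, 0 <= c i j.
Hypothesis c_diag : forall j, c j j = 0.
Hypothesis p_ge0 : forall i, 0 <= p i.
Hypothesis Pl_ge0 : forall j, 0 <= Pl j.
Hypothesis Pl_le_Pu : forall j, Pl j <= Pu j.
Hypothesis sum_Pl : \sum_(j in J) Pl j <= 1.
Hypothesis sum_Pu : 1 <= \sum_(j in J) Pu j.
Hypothesis E_ge0 : 0 <= E.

Let I0 : exists i, i \in I.
Proof. by have [j /J_sub_I] := J0; exists j. Qed.

Definition ctransform j mu := finmin I (fun i => p i + mu * c i j).

Definition dual_obj lam mu :=
  \sum_(j in J) min_scale (Pl j) (Pu j) (ctransform j mu - lam) - mu * E + lam.

Lemma ctransform_le j mu i : i \in I -> ctransform j mu <= p i + mu * c i j.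
Proof. exact: finmin_le. Qed.

Lemma ctransform_concave j m1 m2 t : 0 <= t <= 1 ->
  t * ctransform j m1 + (1 - t) * ctransform j m2 <= ctransform j (t * m1 + (1 - t) * m2).
Proof. exact: finmin_affine_concave. Qed.

Lemma dual_obj_concave l1 l2 m1 m2 t : 0 <= t <= 1 ->
  t * dual_obj l1 m1 + (1 - t) * dual_obj l2 m2
    <= dual_obj (t * l1 + (1 - t) * l2) (t * m1 + (1 - t) * m2).
Proof.
move=> t01; rewrite /dual_obj.
set l := t * l1 + _; set m := t * m1 + _.
suff : t * \sum_(j in J) min_scale (Pl j) (Pu j) (ctransform j m1 - l1)
     + (1 - t) * \sum_(j in J) min_scale (Pl j) (Pu j) (ctransform j m2 - l2)
    <= \sum_(j in J) min_scale (Pl j) (Pu j) (ctransform j m - l) by rewrite /l /m; lra.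
rewrite !mulr_sumr -big_split /=; apply: ler_sum => j _.
apply: le_trans (min_scale_concave _ _ _ _ t01) _; apply: min_scale_homo.
  by rewrite Pl_ge0 Pl_le_Pu.
have := ctransform_concave j m1 m2 t01; rewrite -/m /l; lra.
Qed.

Definition marginal (x : T -> T -> R) j := \sum_(i in I) x i j.

Record plan (x : T -> T -> R) : Prop := Plan {
  plan_ge0 : forall i j, 0 <= x i j;
  plan_supp : forall i j, ~~ ((i \in I) && (j \in J)) -> x i j = 0;
  plan_lo : forall j, j \in J -> Pl j <= marginal x j;
  plan_hi : forall j, j \in J -> marginal x j <= Pu j;
  plan_mass : \sum_(j in J) marginal x j = 1 }.

Definition pairing (x w : T -> T -> R) := \sum_(i in I) \sum_(j in J) x i j * w i j.
Definition value x := pairing x (fun i _ => p i).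
Definition cost x := pairing x c.

Lemma value_add_cost x mu :
  value x + mu * cost x = pairing x (fun i j => p i + mu * c i j).
Proof.
rewrite /value /cost /pairing mulr_sumr -big_split; apply: eq_bigr => i _ /=.
by rewrite mulr_sumr -big_split; apply: eq_bigr => j _ /=; ring.
Qed.

Lemma weak_duality x lam mu : plan x -> dual_obj lam mu <= value x + mu * (cost x - E).
Proof.
move=> Px.
have lower : \sum_(j in J) min_scale (Pl j) (Pu j) (ctransform j mu - lam)
    <= \sum_(j in J) marginal x j * (ctransform j mu - lam).
  by apply: ler_sum => j Jj; apply: min_scale_le; rewrite plan_lo ?plan_hi.
have mass : \sum_(j in J) marginal x j * (ctransform j mu - lam)
    = \sum_(j in J) marginal x j * ctransform j mu - lam.
  by under eq_bigr do rewrite mulrBr; rewrite sumrB -mulr_suml plan_mass // mul1r.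
have upper : \sum_(j in J) marginal x j * ctransform j mu <= value x + mu * cost x.
  rewrite value_add_cost /pairing exchange_big /=; apply: ler_sum => j Jj.
  rewrite /marginal mulr_suml; apply: ler_sum => i Ii.
  by apply: ler_wpM2l; [exact: plan_ge0 | exact: ctransform_le].
rewrite /dual_obj; lra.
Qed.

Definition route (sg : T -> T) (g : T -> R) i j :=
  if (j \in J) && (i == sg j) then g j else 0.

Section Route.
Variables (sg : T -> T) (g : T -> R).
Hypothesis sgI : forall j, j \in J -> sg j \in I.

Lemma pairing_route w : pairing (route sg g) w = \sum_(j in J) g j * w (sg j) j.
Proof.
rewrite /pairing exchange_big; apply: eq_bigr => j Jj /=.
rewrite (bigD1 (sg j)) ?sgI //= /route Jj eqxx big1 ?addr0 // => i /andP[_ /negbTE ->].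
by rewrite mul0r.
Qed.

Lemma marginal_route j : j \in J -> marginal (route sg g) j = g j.
Proof.
move=> Jj; rewrite /marginal (bigD1 (sg j)) ?sgI //= /route Jj eqxx big1 ?addr0 //.
by move=> i /andP[_ /negbTE ->].
Qed.

Lemma plan_route : (forall j, j \in J -> Pl j <= g j <= Pu j) ->
  \sum_(j in J) g j = 1 -> plan (route sg g).
Proof.
move=> gbox gmass; split.
- move=> i j; rewrite /route; case: ifP => // /andP[Jj _].
  by case/andP: (gbox j Jj) => /(le_trans (Pl_ge0 j)).
- move=> i j; rewrite /route; case: ifP => // /andP[Jj /eqP->].
  by rewrite sgI ?Jj.
- by move=> j Jj; rewrite marginal_route //; case/andP: (gbox j Jj).
- by move=> j Jj; rewrite marginal_route //; case/andP: (gbox j Jj).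
- by rewrite (eq_bigr _ marginal_route).
Qed.

End Route.

Lemma dual_attained mu : exists2 j0, j0 \in J &
  exists x, plan x /\ dual_obj (ctransform j0 mu) mu = value x + mu * (cost x - E).
Proof.
have attained j : exists i, i \in I /\ ctransform j mu = p i + mu * c i j.
  by have [i Ii [e _]] := finmin_attained (fun i => p i + mu * c i j) I0; exists i.
have [sg sgP] := choice attained.
have sgI j : j \in J -> sg j \in I by move=> _; case: (sgP j).
have [j0 Jj0 [g [gbox gmass gslack]]] :=
  greedy_weights (ctransform^~ mu) J0 (fun j _ => Pl_le_Pu j) sum_Pl sum_Pu.
exists j0 => //; exists (route sg g); split; first exact: plan_route.
have -> : value (route sg g) + mu * (cost (route sg g) - E)
    = \sum_(j in J) g j * ctransform j mu - mu * E.
  rewrite mulrBr addrA value_add_cost pairing_route //.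
  by congr (_ - _); apply: eq_bigr => j _; case: (sgP j) => _ ->.
rewrite /dual_obj (eq_bigr _ gslack).
under eq_bigr do rewrite mulrBr.
by rewrite sumrB -mulr_suml gmass mul1r; lra.
Qed.

Definition mix t (x y : T -> T -> R) i j := t * x i j + (1 - t) * y i j.

Lemma pairing_mix t x y w : pairing (mix t x y) w = t * pairing x w + (1 - t) * pairing y w.
Proof.
rewrite /pairing !mulr_sumr -big_split; apply: eq_bigr => i _ /=.
by rewrite !mulr_sumr -big_split; apply: eq_bigr => j _ /=; rewrite /mix; ring.
Qed.

Lemma marginal_mix t x y j :
  marginal (mix t x y) j = t * marginal x j + (1 - t) * marginal y j.
Proof. by rewrite /marginal !mulr_sumr -big_split. Qed.

Lemma plan_mix t x y : 0 <= t <= 1 -> plan x -> plan y -> plan (mix t x y).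
Proof.
case/andP=> t0 t1; have t1' : 0 <= 1 - t by rewrite subr_ge0.
move=> Px Py; split.
- by move=> i j; apply: addr_ge0; apply: mulr_ge0 => //; exact: plan_ge0.
- by move=> i j ij; rewrite /mix !plan_supp // !mulr0 addr0.
- move=> j Jj; rewrite marginal_mix.
  have := plan_lo Px Jj; have := plan_lo Py Jj; nra.
- move=> j Jj; rewrite marginal_mix.
  have := plan_hi Px Jj; have := plan_hi Py Jj; nra.
- under eq_bigr do rewrite marginal_mix.
  by rewrite big_split /= -!mulr_sumr (plan_mass Px) (plan_mass Py); ring.
Qed.

Lemma plan_le1 x i j : plan x -> x i j <= 1.
Proof.
move=> Px; have [/andP[Ii Jj]|ij] := boolP ((i \in I) && (j \in J)); last first.
  by rewrite plan_supp.
have marginal_ge0 k : 0 <= marginal x k by apply: sumr_ge0 => *; exact: plan_ge0.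
apply: le_trans (_ : marginal x j <= 1).
  by rewrite /marginal (bigD1 i) //= lerDl sumr_ge0 // => *; exact: plan_ge0.
by rewrite -(plan_mass Px) (bigD1 j) //= lerDl sumr_ge0.
Qed.

(* Mass paying a positive cost is moved onto the diagonal, which is free. *)
Definition collapse (x : T -> T -> R) i j : R :=
  (if c i j == 0 then x i j else 0) +
  (if i == j then \sum_(k in I) (if c k j == 0 then 0 else x k j) else 0).

Lemma marginal_collapse x j : j \in J -> marginal (collapse x) j = marginal x j.
Proof.
move=> Jj; rewrite /marginal /collapse big_split /= [X in _ + X](bigD1 j (J_sub_I Jj)) /= eqxx.
rewrite [X in _ + (_ + X)]big1 => [|i /andP[_ /negbTE ->] //].
by rewrite addr0 -big_split /=; apply: eq_bigr => i _; case: ifP; rewrite ?addr0 ?add0r.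
Qed.

Lemma plan_collapse x : plan x -> plan (collapse x).
Proof.
move=> Px; split.
- move=> i j; rewrite /collapse addr_ge0 //; first by case: ifP => _; rewrite ?plan_ge0.
  by case: ifP => _ //; apply: sumr_ge0 => k _; case: ifP => _; rewrite ?plan_ge0.
- move=> i j ij; rewrite /collapse (plan_supp Px ij) if_same add0r.
  case: eqP => // eij; subst j; have iJ : i \notin J.
    by move: ij; apply: contraNN => Ji; rewrite Ji J_sub_I.
  rewrite big1 // => k _; suff -> : x k i = 0 by rewrite if_same.
  by apply: (plan_supp Px); rewrite (negbTE iJ) andbF.
- by move=> j Jj; rewrite marginal_collapse //; exact: plan_lo.
- by move=> j Jj; rewrite marginal_collapse //; exact: plan_hi.
- by rewrite (eq_bigr _ (marginal_collapse x)) (plan_mass Px).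
Qed.

Lemma cost_collapse x : cost (collapse x) = 0.
Proof.
rewrite /cost /pairing big1 // => i _; rewrite big1 // => j _.
rewrite /collapse mulrDl; case: eqP => [->|_]; rewrite ?mulr0 ?mul0r ?add0r //.
by case: eqP => [->|_]; rewrite ?c_diag ?mulr0 ?mul0r.
Qed.

Lemma value_collapse x : value (collapse x)
  = \sum_(i in I) \sum_(j in J) x i j * (if c i j == 0 then p i else p j).
Proof.
have diag : \sum_(i in I) \sum_(j in J)
      (if i == j then \sum_(k in I) (if c k j == 0 then 0 else x k j) else 0) * p i
    = \sum_(i in I) \sum_(j in J) (if c i j == 0 then 0 else x i j * p j).
  rewrite exchange_big [RHS]exchange_big; apply: eq_bigr => j Jj /=.
  rewrite (bigD1 j (J_sub_I Jj)) /= eqxx [X in _ + X]big1; last first.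
    by move=> i /andP[_ /negbTE ->]; rewrite mul0r.
  by rewrite addr0 mulr_suml; apply: eq_bigr => k _; case: ifP; rewrite ?mul0r.
rewrite /value /pairing /collapse; transitivity (
  \sum_(i in I) \sum_(j in J) (if c i j == 0 then x i j else 0) * p i +
  \sum_(i in I) \sum_(j in J)
    (if i == j then \sum_(k in I) (if c k j == 0 then 0 else x k j) else 0) * p i).
  rewrite -big_split; apply: eq_bigr => i _ /=.
  by rewrite -big_split; apply: eq_bigr => j _ /=; exact: mulrDl.
rewrite diag -big_split; apply: eq_bigr => i _ /=.
rewrite -big_split; apply: eq_bigr => j _ /=.
by case: ifP; rewrite ?mul0r ?addr0 ?add0r.
Qed.

Lemma collapse_slack : exists K, forall x, plan x ->
  exists y, [/\ plan y, cost y <= 0 & value y <= value x + K * cost x].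
Proof.
(* where [c i j = 0] the term is [0], by the convention [x / 0 = 0] *)
pose K := \sum_(i in I) \sum_(j in J) p j / c i j.
have ratio_le_K i j : i \in I -> j \in J -> p j / c i j <= K.
  move=> Ii Jj; rewrite /K (bigD1 i) //= (bigD1 j) //= -addrA lerDl.
  by rewrite addr_ge0 ?sumr_ge0 // => *; rewrite ?sumr_ge0 // => *; rewrite divr_ge0.
exists K => x Px; exists (collapse x); split.
- exact: plan_collapse.
- by rewrite cost_collapse.
rewrite value_collapse value_add_cost /pairing; apply: ler_sum => i Ii.
apply: ler_sum => j Jj; apply: ler_wpM2l; first exact: plan_ge0.
case: eqP => [->|/eqP c0]; first by rewrite mulr0 addr0.
apply: le_trans (_ : K * c i j <= _); last by rewrite lerDr.
rewrite -[p j](divfK c0) ler_wpM2r //; exact: ratio_le_K.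
Qed.

Lemma marginal_continuous j : continuous (fun x => marginal x j).
Proof. by apply: continuous_sum => i; exact: entry_continuous. Qed.

Lemma pairing_continuous w : continuous (fun x => pairing x w).
Proof.
apply: continuous_sum => i; apply: continuous_sum => j x.
by apply: continuousM; [exact: entry_continuous | exact: cst_continuous].
Qed.

Lemma feasible_closed : closed [set x | plan x /\ cost x <= E].
Proof.
have cl_le (g : (T -> T -> R) -> R) r :
    continuous g -> closed [set x | g x <= r].
  by move=> gc; exact: (continuous_closedP g).1 gc _ (@closed_le _ r).
have cl_ge (g : (T -> T -> R) -> R) r :
    continuous g -> closed [set x | r <= g x].
  by move=> gc; exact: (continuous_closedP g).1 gc _ (@closed_ge _ r).
have cl_eq (g : (T -> T -> R) -> R) r :
    continuous g -> closed [set x | g x = r].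
  by move=> gc; exact: (continuous_closedP g).1 gc _ (@closed_eq _ r).
rewrite (_ : mkset _ =
  [set x | forall i j, 0 <= x i j] `&`
  [set x | forall i j, ~~ ((i \in I) && (j \in J)) -> x i j = 0] `&`
  [set x | forall j, j \in J -> Pl j <= marginal x j] `&`
  [set x | forall j, j \in J -> marginal x j <= Pu j] `&`
  [set x | \sum_(j in J) marginal x j = 1] `&` [set x | cost x <= E]).
  repeat apply: closedI.
  - by do 2 apply: closed_forall => ?; apply: cl_ge; exact: entry_continuous.
  - do 2 apply: closed_forall => ?; apply: closed_implies.
    by apply: cl_eq; exact: entry_continuous.
  - by apply: closed_forall => j; apply: closed_implies; apply: cl_ge; exact: marginal_continuous.
  - by apply: closed_forall => j; apply: closed_implies; apply: cl_le; exact: marginal_continuous.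
  - by apply: cl_eq; apply: continuous_sum => j; exact: marginal_continuous.
  - by apply: cl_le; exact: pairing_continuous.
apply/seteqP; split => x.
  by case=> -[? ? ? ? ?] ?; do !split.
by case=> -[] [] [] [] ? ? ? ? ? ?; do !split.
Qed.

Lemma exists_optimal_plan : exists xs, [/\ plan xs, cost xs <= E &
  forall x, plan x -> cost x <= E -> value xs <= value x].
Proof.
have feasible0 : [set x | plan x /\ cost x <= E] !=set0.
  have [_ _ [x [Px _]]] := dual_attained 0; have [K slackK] := collapse_slack.
  by have [y [Py cy _]] := slackK x Px; exists y; split; last exact: le_trans cy E_ge0.
have feasible_compact : compact [set x | plan x /\ cost x <= E].
  apply: subclosed_compact feasible_closed (@unit_box_compact R T) _.
  by move=> x [Px _] i j; rewrite in_itv /= plan_ge0 // plan_le1.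
have [xs /set_mem[Pxs cxs] xs_min] := compact_EVT_min feasible0 feasible_compact
  (continuous_subspaceT (@pairing_continuous (fun i _ => p i))).
by exists xs; split => // x Px cx; apply: xs_min; apply: mem_set.
Qed.

Theorem dual_obj_max_eq_primal_min : exists lam0 mu0 xs,
  [/\ 0 <= mu0, forall lam mu, 0 <= mu -> dual_obj lam mu <= dual_obj lam0 mu0,
      plan xs /\ cost xs <= E,
      forall x, plan x -> cost x <= E -> value xs <= value x &
      value xs = dual_obj lam0 mu0].
Proof.
have [xs [Pxs cxs xs_min]] := exists_optimal_plan.
have [mu0 mu0_ge0 multiplier] := lagrange_multiplier (mix := mix) plan_mix
  (fun t x y => pairing_mix t x y _) (fun t x y => pairing_mix t x y _) E_ge0
  collapse_slack xs_min.
have [j0 _ [x [Px dual_x]]] := dual_attained mu0.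
have dual_le_value lam mu : 0 <= mu -> dual_obj lam mu <= value xs.
  move=> mu_ge0; apply: le_trans (weak_duality lam mu Pxs) _.
  by rewrite gerDl mulr_ge0_le0 // subr_le0.
have value_eq : value xs = dual_obj (ctransform j0 mu0) mu0.
  by apply/le_anti; rewrite dual_le_value // dual_x multiplier.
by exists (ctransform j0 mu0), mu0, xs; split; rewrite // -value_eq; exact: dual_le_value.
Qed.

Theorem dual_obj_max_at_ctransform mu : exists2 j, j \in J &
  (forall lam, dual_obj lam mu <= dual_obj (ctransform j mu) mu) /\
  (forall j', j' \in J -> dual_obj (ctransform j' mu) mu <= dual_obj (ctransform j mu) mu).
Proof.
have [j0 Jj0 [x [Px dual_x]]] := dual_attained mu.
have [j Jj dual_max] := arg_maxP (fun j => dual_obj (ctransform j mu) mu) Jj0.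
exists j => //; split => // lam; apply: le_trans (dual_max _ Jj0).
by rewrite dual_x weak_duality.
Qed.

End TransportDual.

Section LinearProgram.
Variables (R : realType) (n N m : nat) (s eps : R).
Variables (f : 'I_m -> 'rV[R]_n -> 'rV[R]_n) (W : set 'rV[R]_n).
Variables (Qs : 'I_N -> set 'rV[R]_n) (Pl Pu : 'I_N -> 'I_m -> 'I_N -> R).
Variables (p : 'I_N -> R) (q : 'I_N) (a : 'I_m).

Local Notation I := (NbarW Qs f W q a).
Local Notation J := (Nbar Pu q a).
Local Notation c := (fun i j => setcost s (Qs i) (Qs j)).
Local Notation E := (eps `^ s).
Local Notation plan := (plan I J (Pl q a) (Pu q a)).
Local Notation value := (value I J p).
Local Notation cost := (cost I J c).
Local Notation LPfeasible := (LPfeasible Qs f W s eps Pl Pu q a).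
Local Notation LPobj := (LPobj Qs f W p q a).

Lemma Nbar_bounds : (forall j, 0 <= Pl q a j <= Pu q a j) ->
  \sum_j Pl q a j <= 1 -> 1 <= \sum_j Pu q a j ->
  [/\ exists j, j \in J, \sum_(j in J) Pl q a j <= 1 & 1 <= \sum_(j in J) Pu q a j].
Proof.
move=> Pbox sum_Pl sum_Pu.
have Pu_J : \sum_(j in J) Pu q a j = \sum_j Pu q a j.
  rewrite [RHS](bigID (mem J)) /= [X in _ = _ + X]big1 ?addr0 // => j.
  rewrite inE -leNgt => Pu_le0; apply/le_anti; rewrite Pu_le0.
  by case/andP: (Pbox j) => /le_trans; apply.
split; last by rewrite Pu_J.
- apply/existsP; apply: contraTT sum_Pu => /existsPn J0.
  by rewrite -Pu_J big_pred0 -?ltNge ?ltr01 // => j; apply/negbTE/J0.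
- apply: le_trans sum_Pl; rewrite [leRHS](bigID (mem J)) /= lerDl.
  by apply: sumr_ge0 => j _; case/andP: (Pbox j).
Qed.

Lemma plan_of_LPfeasible gam gamh pi : LPfeasible gam gamh pi ->
  exists x, [/\ plan x, cost x <= E & value x = LPobj gam].
Proof.
case=> box [mass [pi_ge0 [col [row costE]]]].
pose x i j := if (i \in I) && (j \in J) then pi i j else 0.
have x_pi i j : i \in I -> j \in J -> x i j = pi i j by rewrite /x => -> ->.
have marginal_x j : j \in J -> marginal I x j = gamh j.
  by move=> Jj; rewrite -col //; apply: eq_bigr => i Ii; rewrite x_pi.
have pairing_x w : pairing I J x w = \sum_(i in I) \sum_(j in J) pi i j * w i j.
  by apply: eq_bigr => i Ii; apply: eq_bigr => j Jj; rewrite x_pi.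
exists x; split.
- split.
  + by move=> i j; rewrite /x; case: ifP => // /andP[]; exact: pi_ge0.
  + by move=> i j /negbTE ij; rewrite /x ij.
  + by move=> j Jj; rewrite marginal_x //; case/andP: (box j Jj).
  + by move=> j Jj; rewrite marginal_x //; case/andP: (box j Jj).
  + by rewrite (eq_bigr _ marginal_x).
- by rewrite /cost pairing_x.
- by rewrite /value pairing_x; apply: eq_bigr => i Ii; rewrite -row // mulr_suml.
Qed.

Lemma LPfeasible_of_plan x : plan x -> cost x <= E ->
  exists gam gamh, LPfeasible gam gamh x /\ LPobj gam = value x.
Proof.
move=> Px cx; exists (fun i => \sum_(j in J) x i j), (marginal I x); split.
  do !split => //.
  - by move=> j Jj; rewrite (plan_lo Px Jj) (plan_hi Px Jj).
  - exact: (plan_mass Px).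
  - by move=> i j _ _; exact: (plan_ge0 Px).
by apply: eq_bigr => i _; rewrite mulr_suml.
Qed.

End LinearProgram.

Theorem theorem4 (R : realType) (n N m : nat) (s eps : R)
  (f : 'I_m -> 'rV[R]_n -> 'rV[R]_n) (W : set 'rV[R]_n)
  (Qs : 'I_N -> set 'rV[R]_n) (X : set 'rV[R]_n) (u : 'I_N)
  (Pl Pu : 'I_N -> 'I_m -> 'I_N -> R) (p : 'I_N -> R)
  (q : 'I_N) (a : 'I_m) :
  (1 <= n)%N -> 1 <= s -> 0 <= eps ->
  (forall b, continuous (f b)) ->
  (* the abstraction: Q = Q_safe U {q_u}, pairwise disjoint, Q_safe covers the
     bounded set X, q_u = R^n \ X *)
  bounded_set X ->
  Qs u = ~` X ->
  (forall i j, i != j -> Qs i `&` Qs j = set0) ->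
  (forall x, exists i, Qs i x) ->
  (* interval bounds *)
  (forall q1 b q2, 0 <= Pl q1 b q2 <= Pu q1 b q2 /\ Pu q1 b q2 <= 1) ->
  (forall q1 b, \sum_(q2 < N) Pl q1 b q2 <= 1 /\ 1 <= \sum_(q2 < N) Pu q1 b q2) ->
  (forall b, Pl u b u = 1 /\ Pu u b u = 1) ->
  (* nominal distribution supported in W *)
  (forall q1 b, Nbar Pu q1 b \subset NbarW Qs f W q1 b) ->
  (* underline p^k >= 0 *)
  (forall i, 0 <= p i) ->
  let G := Gfun Qs f W s eps Pl Pu p q a in
  let h := hfun Qs s p (NbarW Qs f W q a) in
  let J := Nbar Pu q a in
  (* G is concave on R x [0, +oo) *)
  (forall l1 l2 m1 m2 t, 0 <= m1 -> 0 <= m2 -> 0 <= t <= 1 ->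
     t * G l1 m1 + (1 - t) * G l2 m2
       <= G (t * l1 + (1 - t) * l2) (t * m1 + (1 - t) * m2))
  /\
  (* max_{mu >= 0, lambda} G is attained and equals the optimal value of (LP) *)
  (exists lam0 mu0, 0 <= mu0 /\
     (forall l mu, 0 <= mu -> G l mu <= G lam0 mu0) /\
     exists gam gamh pi,
       LPfeasible Qs f W s eps Pl Pu q a gam gamh pi /\
       (forall gam' gamh' pi', LPfeasible Qs f W s eps Pl Pu q a gam' gamh' pi' ->
          LPobj Qs f W p q a gam <= LPobj Qs f W p q a gam') /\
       LPobj Qs f W p q a gam = G lam0 mu0)
  /\
  (* for every mu >= 0: max_lambda G(lambda, mu) = max_{j in J} G(h_j(mu), mu) *)
  (forall mu, 0 <= mu ->
     exists2 j, j \in J &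
       (forall l, G l mu <= G (h j mu) mu) /\
       (forall j', j' \in J -> G (h j' mu) mu <= G (h j mu) mu)).
Proof.
move=> _ s_ge1 _ _ _ _ _ _ P_bounds P_mass _ Nbar_sub p_ge0 G h J.
pose c i j := setcost s (Qs i) (Qs j); pose E := eps `^ s.
have Pl_ge0 j : 0 <= Pl q a j by case/andP: (P_bounds q a j).1.
have Pl_le_Pu j : Pl q a j <= Pu q a j by case/andP: (P_bounds q a j).1.
have [J0 sum_Pl sum_Pu] :=
  Nbar_bounds (fun j => (P_bounds q a j).1) (P_mass q a).1 (P_mass q a).2.
have J_sub_I : {subset J <= NbarW Qs f W q a} := fintype.subsetP (Nbar_sub q a).
have c_ge0 i j : 0 <= c i j by exact: setcost_ge0.
have c_diag j : c j j = 0.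
  by apply: setcost_diag; rewrite gt_eqF // (lt_le_trans ltr01 s_ge1).
have E_ge0 : 0 <= E by exact: powR_ge0.
split; first by move=> *; exact: (dual_obj_concave c p E J_sub_I J0 Pl_ge0 Pl_le_Pu).
split; last by move=> mu _;
  exact: (dual_obj_max_at_ctransform c p E J_sub_I J0 Pl_ge0 Pl_le_Pu sum_Pl sum_Pu).
have [lam0 [mu0 [xs [mu0_ge0 dual_max [Pxs cxs] xs_min value_eq]]]] :=
  dual_obj_max_eq_primal_min J_sub_I J0 c_ge0 c_diag p_ge0 Pl_ge0 Pl_le_Pu
    sum_Pl sum_Pu E_ge0.
have [gam [gamh [LPxs obj_xs]]] := LPfeasible_of_plan p Pxs cxs.
exists lam0, mu0; do 2 split => //; exists gam, gamh, xs; do 2 split => //.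
  by move=> ? ? ? /(plan_of_LPfeasible p)[x [Px cx <-]]; rewrite obj_xs; exact: xs_min.
by rewrite obj_xs value_eq.
Qed.
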